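(* Let $1\le p<\infty$, let $f$ be a function on $[0,1]$, let $0=x_0<x_1<\dots<x_M=1$, and let $g_M$ be the piecewise linear function interpolating $f$ at the points $(x_i,f(x_i))$, $0\le i\le M$. Then $\mathrm{Var}_p(g_M)\le\upsilon_p(M,f)$.
   Context: For $h$ on $[0,1]$ and $I$ an interval, $h(I)=h(\sup I)-h(\inf I)$. $\upsilon_p(n,f)=\sup(\sum_{j=1}^n|f(I_j)|^p)^{1/p}$ over collections of $n$ nonoverlapping subintervals of $[0,1]$. $\mathrm{Var}_p(g)=\sup(\sum_j|g(I_j)|^p)^{1/p}$ over all finite collections of nonoverlapping subintervals of $[0,1]$. *)

From HB Require Import structures.
From mathcomp Require Import all_boot all_order all_algebra.
From mathcomp Require Import all_classical all_reals all_analysis.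
Set Implicit Arguments. Unset Strict Implicit. Unset Printing Implicit Defensive.
Import Order.TTheory GRing.Theory Num.Theory.
Local Open Scope classical_set_scope.
Local Open Scope ring_scope.

(* A collection of n subintervals I_j of [0,1], j < n, given by their
   endpoints a j = inf I_j <= b j = sup I_j; nonoverlapping = pairwise
   disjoint interiors. *)
Definition nonoverlap {R : realType} (n : nat) (a b : nat -> R) : Prop :=
  (forall j, (j < n)%N -> 0 <= a j /\ a j <= b j /\ b j <= 1) /\
  (forall j k, (j < n)%N -> (k < n)%N -> j <> k -> b j <= a k \/ b k <= a j).

Definition pvar_sum {R : realType} (p : R) (h : R -> R) (n : nat)
  (a b : nat -> R) : R :=
  (\sum_(j < n) `|h (b j) - h (a j)| `^ p) `^ p^-1.

Definition upsilon {R : realType} (p : R) (n : nat) (f : R -> R) : \bar R :=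
  ereal_sup [set y : \bar R | exists a b : nat -> R,
                nonoverlap n a b /\ y = (pvar_sum p f n a b)%:E].

Definition Varp {R : realType} (p : R) (g : R -> R) : \bar R :=
  ereal_sup [set y : \bar R | exists (n : nat) (a b : nat -> R),
                nonoverlap n a b /\ y = (pvar_sum p g n a b)%:E].

From HB Require Import structures.
From mathcomp Require Import all_boot all_order all_algebra.
From mathcomp Require Import all_classical all_reals all_analysis.
From mathcomp Require Import ring lra.
Set Implicit Arguments. Unset Strict Implicit. Unset Printing Implicit Defensive.
Import Order.TTheory GRing.Theory Num.Theory.
Local Open Scope ring_scope.

(* Fix a family of intervals and translate simultaneously, by a common amount s, all of its
   endpoints lying strictly inside one piece (x_i, x_(i+1)) of the partition, as far as
   possible to the left or to the right.  Since g is affine on the piece, each increment of g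
   over an interval is the same convex combination of its increments after the two extreme
   translations, so by convexity of |.|^p one of them does not decrease the p-th power sum;
   it also puts one more endpoint on a node.  Iterating, every endpoint becomes a node, where
   g = f.  The nondegenerate intervals then start at pairwise distinct nodes x_k with k < M,
   so they form (after padding) a family of M intervals for f. *)

Section IntervalFamilies.
Variable R : realType.
Implicit Types (p t u v : R) (h phi : R -> R) (a b : nat -> R).

Definition psum p h n a b : R := \sum_(j < n) `|h (b j) - h (a j)| `^ p.

Definition endpoint {n} a b (e : 'I_n * bool) : R := if e.2 then b e.1 else a e.1.

Definition endpoints n a b : seq R := codom (@endpoint n a b).

Lemma psum_ge0 p h n a b : 0 <= psum p h n a b.
Proof. by apply: sumr_ge0 => j _; exact: powR_ge0. Qed.

Lemma pvar_sum_le p h h' n n' a b a' b' : 0 <= p ->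
  psum p h n a b <= psum p h' n' a' b' -> pvar_sum p h n a b <= pvar_sum p h' n' a' b'.
Proof. by move=> p0; apply: ge0_ler_powR; rewrite ?invr_ge0 ?nnegrE ?psum_ge0. Qed.

Lemma norm_powR_convex p t u v : 1 <= p -> 0 <= t <= 1 ->
  `|t * u + (1 - t) * v| `^ p <= t * `|u| `^ p + (1 - t) * `|v| `^ p.
Proof.
move=> p1 /andP[t0 t1]; have p0 : 0 <= p by rewrite (le_trans ler01).
have t0' : 0 <= 1 - t by rewrite subr_ge0.
apply: (@le_trans _ _ ((t * `|u| + (1 - t) * `|v|) `^ p)).
  rewrite ge0_ler_powR ?nnegrE ?addr_ge0 ?mulr_ge0 ?subr_ge0 //.
  by rewrite (le_trans (ler_normD _ _)) // !normrM (ger0_norm t0) (ger0_norm t0').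
have /(_ `|u| `|v|) := convex_powR p1 (Itv01 t0 t1).
by rewrite !inE /= !in_itv /= !normr_ge0 => /(_ isT isT).
Qed.

Lemma endpoint_comp n phi a b (e : 'I_n * bool) :
  endpoint (phi \o a) (phi \o b) e = phi (endpoint a b e).
Proof. by rewrite /endpoint; case: ifP. Qed.

Lemma mem_endpoints_l n a b j : (j < n)%N -> a j \in endpoints n a b.
Proof. by move=> jn; exact: (codom_f _ (Ordinal jn, false)). Qed.

Lemma mem_endpoints_r n a b j : (j < n)%N -> b j \in endpoints n a b.
Proof. by move=> jn; exact: (codom_f _ (Ordinal jn, true)). Qed.

Lemma psum_le_max_conv p t h phi1 phi2 n a b : 1 <= p -> 0 <= t <= 1 ->
  {in endpoints n a b, forall u, h u = t * h (phi1 u) + (1 - t) * h (phi2 u)} ->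
  psum p h n a b <=
    Num.max (psum p h n (phi1 \o a) (phi1 \o b)) (psum p h n (phi2 \o a) (phi2 \o b)).
Proof.
move=> p1 t01 hconv; have [t0 t1] := andP t01.
apply: (@le_trans _ _ (t * psum p h n (phi1 \o a) (phi1 \o b)
                        + (1 - t) * psum p h n (phi2 \o a) (phi2 \o b))).
  rewrite /psum !mulr_sumr -big_split /=; apply: ler_sum => j _.
  have jn := ltn_ord j.
  rewrite (hconv _ (mem_endpoints_l a b jn)) (hconv _ (mem_endpoints_r a b jn)).
  rewrite [X in `|X|](_ : _ = t * (h (phi1 (b j)) - h (phi1 (a j)))
                         + (1 - t) * (h (phi2 (b j)) - h (phi2 (a j)))) ?norm_powR_convex //.
  by ring.
set S1 := psum _ _ _ _ _; set S2 := psum _ _ _ _ _.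
have t0' : 0 <= 1 - t by rewrite subr_ge0.
have [S1M S2M] : S1 <= Num.max S1 S2 /\ S2 <= Num.max S1 S2 by rewrite !le_max !lexx orbT.
apply: le_trans (lerD (ler_wpM2l t0 S1M) (ler_wpM2l t0' S2M)) _.
by rewrite -mulrDl addrC subrK mul1r.
Qed.

Lemma nonoverlap_endpoints01 n a b : nonoverlap n a b ->
  {in endpoints n a b, forall u, 0 <= u <= 1}.
Proof.
move=> [ab _] _ /codomP[[j []] ->]; have [a0 [abj b1]] := ab j (ltn_ord j).
  by rewrite /= b1 (le_trans a0).
by rewrite /= a0 (le_trans abj).
Qed.

Lemma nonoverlap_comp n a b phi : nonoverlap n a b ->
  {in endpoints n a b &, {homo phi : u v / u <= v}} ->
  {in endpoints n a b, forall u, 0 <= phi u <= 1} ->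
  nonoverlap n (phi \o a) (phi \o b).
Proof.
move=> [ab disj] phi_homo phi01; split=> [j jn | j k jn kn jk] /=.
  have /andP[-> _] := phi01 _ (mem_endpoints_l a b jn).
  have /andP[_ ->] := phi01 _ (mem_endpoints_r a b jn).
  by have [_ [abj _]] := ab j jn; rewrite phi_homo ?mem_endpoints_l ?mem_endpoints_r.
by case: (disj j k jn kn jk) => [bja|bka]; [left|right];
  rewrite phi_homo ?mem_endpoints_l ?mem_endpoints_r.
Qed.

Lemma sum_le_sum_pick (I J : finType) (Q : J -> I -> bool) (F : I -> R) :
  (forall i, 0 <= F i) -> (forall i, F i != 0 -> exists j, Q j i) ->
  (forall j i i', Q j i -> Q j i' -> i = i') ->
  \sum_i F i <= \sum_j oapp F 0 [pick i | Q j i].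
Proof.
move=> F0 Fcover Qfun.
apply: (@le_trans _ _ (\sum_i \sum_j (if Q j i then F i else 0))).
  apply: ler_sum => i _; have [Fi0|/Fcover[j Qji]] := eqVneq (F i) 0.
    by rewrite Fi0; apply: sumr_ge0 => j _; case: ifP.
  by rewrite (bigD1 j) //= Qji lerDl; apply: sumr_ge0 => j' _; case: ifP.
rewrite exchange_big /=; apply: ler_sum => j _; case: pickP => [i Qji|noQ] /=.
  rewrite (bigD1 i) //= Qji big1 ?addr0 // => i' i'i.
  by case: ifP => // /(Qfun _ _ _ Qji) ii'; rewrite ii' eqxx in i'i.
by rewrite big1 // => i _; rewrite noQ.
Qed.

End IntervalFamilies.

Section Partition.
Variables (R : realType) (M : nat) (x : nat -> R).
Hypothesis x_incr : forall i, (i < M)%N -> x i < x i.+1.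

Lemma ler_partition : {in [pred k | (k <= M)%N] &, {mono x : i j / (i <= j)%N >-> i <= j}}.
Proof.
apply: Order.NatMonotonyTheory.incn_inP => [i j _ jM k /andP[_ /ltW kj]|i _ iM].
  by rewrite inE (leq_trans kj).
exact: x_incr iM.
Qed.

Lemma ltr_partition : {in [pred k | (k <= M)%N] &, {mono x : i j / (i < j)%N >-> i < j}}.
Proof. exact: leW_mono_in ler_partition. Qed.

Definition nodes : seq R := mkseq x M.+1.

Lemma mem_nodes k : (k <= M)%N -> x k \in nodes.
Proof. by move=> kM; apply: map_f; rewrite mem_iota. Qed.

Lemma nodesP u : reflect (exists2 k, (k <= M)%N & u = x k) (u \in nodes).
Proof.
apply: (iffP mapP) => [[k]|[k kM ->]]; last by exists k; rewrite // mem_iota.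
by rewrite mem_iota ltnS => kM ->; exists k.
Qed.

Definition in_piece i u := x i < u < x i.+1.

Lemma in_piece_notin_nodes i u : (i < M)%N -> in_piece i u -> u \notin nodes.
Proof.
move=> iM /andP[xi_u u_xi1]; apply/nodesP => -[k kM eu].
rewrite eu !ltr_partition ?inE ?(ltnW iM) // in xi_u u_xi1.
by move: (leq_ltn_trans xi_u u_xi1); rewrite ltnn.
Qed.

Hypotheses (x0 : x 0%N = 0) (xM : x M = 1).

Lemma notin_nodes_in_piece u : 0 <= u <= 1 -> u \notin nodes ->
  exists2 i, (i < M)%N & in_piece i u.
Proof.
move=> /andP[u0 u1] /nodesP u_off.
suff /(_ M (leqnn M)) : forall k, (k <= M)%N ->
    x k < u \/ exists2 i, (i < k)%N & in_piece i u.
  case=> [|[i iM ui]]; last by exists i.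
  by rewrite xM ltNge u1.
elim=> [_|k IH kM].
  left; rewrite lt_neqAle x0 u0 andbT; apply/eqP => u_0.
  by apply: u_off; exists 0%N; rewrite // x0 u_0.
case: (IH (ltnW kM)) => [xk_u|[i ik ui]]; last by right; exists i => //; exact: ltnW.
case: (ltP u (x k.+1)) => [u_xk1|xk1_u]; first by right; exists k => //; apply/andP.
left; rewrite lt_neqAle xk1_u andbT; apply/eqP => eu.
by apply: u_off; exists k.+1.
Qed.

Definition shift_piece i s u := if in_piece i u then u + s else u.

Lemma shift_piece_nodes i s u : (i < M)%N -> u \in nodes -> shift_piece i s u = u.
Proof.
move=> iM u_node; rewrite /shift_piece; case: ifP => // /(in_piece_notin_nodes iM).
by rewrite u_node.
Qed.

Lemma shift_piece_homo (E : seq R) i s :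
  {in E, forall u, in_piece i u -> x i <= u + s <= x i.+1} ->
  {in E &, {homo shift_piece i s : u v / u <= v}}.
Proof.
move=> Es u v uE vE uv; rewrite /shift_piece.
case: ifPn => ui; case: ifPn => vi; rewrite ?lerD2r //.
  have /andP[_ us] := Es u uE ui; move: ui vi; rewrite /in_piece negb_and -!leNgt.
  by case/andP=> xi_u _ /orP[]; lra.
have /andP[vs _] := Es v vE vi; move: ui vi; rewrite /in_piece negb_and -!leNgt.
by case/orP=> + /andP[xi_v v_xi1]; lra.
Qed.

Lemma shift_piece_nonoverlap i s n (a b : nat -> R) : (i < M)%N -> nonoverlap n a b ->
  {in endpoints n a b, forall u, in_piece i u -> x i <= u + s <= x i.+1} ->
  nonoverlap n (shift_piece i s \o a) (shift_piece i s \o b).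
Proof.
move=> iM NO Es; apply: nonoverlap_comp => //; first exact: shift_piece_homo.
have xi_ge0 : 0 <= x i by rewrite -x0 ler_partition ?inE // ltnW.
have xi1_le1 : x i.+1 <= 1 by rewrite -xM ler_partition ?inE.
move=> u uE; rewrite /shift_piece; case: ifP => ui.
  have /andP[xi_us us_xi1] := Es u uE ui.
  by rewrite (le_trans xi_ge0) // (le_trans us_xi1).
exact: nonoverlap_endpoints01 NO _ uE.
Qed.

Definition offnodes n (a b : nat -> R) : nat :=
  #|[set e : 'I_n * bool | endpoint a b e \notin nodes]|.

Lemma offnodes_comp_lt n (a b : nat -> R) phi (e : 'I_n * bool) :
  (forall u, u \in nodes -> phi u \in nodes) ->
  endpoint a b e \notin nodes -> phi (endpoint a b e) \in nodes ->
  (offnodes n (phi \o a) (phi \o b) < offnodes n a b)%N.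
Proof.
move=> phi_nodes e_off phi_e; apply/proper_card/properP; split.
  apply/fintype.subsetP => e'; rewrite !finset.in_set endpoint_comp.
  by apply: contra => /phi_nodes.
by exists e; rewrite !finset.in_set ?endpoint_comp ?phi_e.
Qed.

Lemma offnodes0 n (a b : nat -> R) (e : 'I_n * bool) :
  offnodes n a b = 0%N -> endpoint a b e \in nodes.
Proof. by move=> /card0_eq/(_ e); rewrite finset.in_set => /negbFE. Qed.

Lemma shift_piece_offnodes_lt i s n (a b : nat -> R) (e : 'I_n * bool) : (i < M)%N ->
  in_piece i (endpoint a b e) -> endpoint a b e + s \in nodes ->
  (offnodes n (shift_piece i s \o a) (shift_piece i s \o b) < offnodes n a b)%N.
Proof.
move=> iM ei es; apply: (offnodes_comp_lt (e := e)) => [u u_node||].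
- by rewrite shift_piece_nodes.
- exact: in_piece_notin_nodes iM ei.
- by rewrite /shift_piece ei.
Qed.

Variables (f g : R -> R).
Hypothesis g_interp : forall i t, (i < M)%N -> x i <= t -> t <= x i.+1 ->
  g t = f (x i) + (f (x i.+1) - f (x i)) * (t - x i) / (x i.+1 - x i).

Lemma interp_nodes u : u \in nodes -> g u = f u.
Proof.
case/nodesP=> k kM ->; have [kM'|Mk] := ltnP k M.
  by rewrite (g_interp kM' (lexx _) (ltW (x_incr kM'))) subrr mulr0 mul0r addr0.
have -> : k = M by apply/eqP; rewrite eqn_leq kM Mk.
have [m Mm] : exists m, M = m.+1.
  by case: (M) xM => [|m _]; [rewrite x0 => /eqP; rewrite eq_sym oner_eq0 | exists m].
have mM : (m < M)%N by rewrite Mm.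
rewrite Mm (g_interp mM (ltW (x_incr mM)) (lexx _)) mulfK; first by ring.
by rewrite subr_eq0 gt_eqF ?x_incr.
Qed.

(* [u] is the convex combination of [u + s1] and [u + s2] with these weights. *)
Lemma interp_shift_conv i s1 s2 u : (i < M)%N -> s1 < 0 -> 0 < s2 ->
  (in_piece i u -> (x i <= u + s1) && (u + s2 <= x i.+1)) ->
  g u = s2 / (s2 - s1) * g (shift_piece i s1 u) + (1 - s2 / (s2 - s1)) * g (shift_piece i s2 u).
Proof.
move=> iM s1_lt0 s2_gt0 us; rewrite /shift_piece; case: ifPn => ui; last by ring.
have /andP[lo hi] := us ui; have /andP[xi_u u_xi1] := ui.
rewrite (g_interp iM (ltW xi_u) (ltW u_xi1)).
rewrite (@g_interp i (u + s1)) ?(@g_interp i (u + s2)) //; try lra.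
by field; rewrite !subr_eq0 !gt_eqF //; lra.
Qed.

Variable p : R.
Hypothesis p1 : 1 <= p.

Lemma psum_le_max_shift_piece i s1 s2 n (a b : nat -> R) :
  (i < M)%N -> s1 < 0 -> 0 < s2 ->
  {in endpoints n a b, forall u, in_piece i u -> (x i <= u + s1) && (u + s2 <= x i.+1)} ->
  psum p g n a b <= Num.max (psum p g n (shift_piece i s1 \o a) (shift_piece i s1 \o b))
                            (psum p g n (shift_piece i s2 \o a) (shift_piece i s2 \o b)).
Proof.
move=> iM s1_lt0 s2_gt0 Es; apply: (psum_le_max_conv (t := s2 / (s2 - s1))) => //.
  have ds : 0 < s2 - s1 by rewrite subr_gt0 (lt_trans s1_lt0).
  by rewrite divr_ge0 ?(ltW s2_gt0) ?(ltW ds) //= ler_pdivrMr // mul1r lerDl oppr_ge0 ltW.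
by move=> u uE; apply: interp_shift_conv => //; exact: Es.
Qed.

Lemma fewer_offnodes_psum_ge n (a b : nat -> R) :
  nonoverlap n a b -> (0 < offnodes n a b)%N ->
  exists a' b', [/\ nonoverlap n a' b', (offnodes n a' b' < offnodes n a b)%N
                   & psum p g n a b <= psum p g n a' b'].
Proof.
move=> NO /card_gt0P[e0]; rewrite finset.in_set => e0_off.
have e0_01 := nonoverlap_endpoints01 NO (codom_f _ e0).
have [i iM e0_in] := notin_nodes_in_piece e0_01 e0_off.
pose P := [pred e | in_piece i (@endpoint _ n a b e)].
case: (arg_minP (endpoint a b) (e0_in : P e0)) => em em_in em_min.
case: (arg_maxP (endpoint a b) (e0_in : P e0)) => eM eM_in eM_max.
set m := endpoint a b em in em_in em_min; set mx := endpoint a b eM in eM_in eM_max.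
have /andP[xi_m _] : in_piece i m := em_in.
have /andP[_ mx_xi1] : in_piece i mx := eM_in.
pose s1 := x i - m; pose s2 := x i.+1 - mx.
have in_range s : s1 <= s <= s2 ->
    {in endpoints n a b, forall u, in_piece i u -> x i <= u + s <= x i.+1}.
  move=> /andP[s1s ss2] _ /codomP[e ->] ei.
  have m_e : m <= endpoint a b e := em_min e ei.
  have e_mx : endpoint a b e <= mx := eM_max e ei.
  by rewrite /s1 /s2 in s1s ss2; apply/andP; split; lra.
have s1_lt0 : s1 < 0 by rewrite subr_lt0.
have s2_gt0 : 0 < s2 by rewrite subr_gt0.
have s1_range : s1 <= s1 <= s2 by rewrite lexx ltW // (lt_trans s1_lt0).
have s2_range : s1 <= s2 <= s2 by rewrite lexx ltW // (lt_trans s1_lt0).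
have Es : {in endpoints n a b, forall u,
    in_piece i u -> (x i <= u + s1) && (u + s2 <= x i.+1)}.
  move=> u uE ui; have /andP[-> _] := in_range s1 s1_range u uE ui.
  by have /andP[_ ->] := in_range s2 s2_range u uE ui.
have := psum_le_max_shift_piece iM s1_lt0 s2_gt0 Es.
case: (leP (psum p g n (shift_piece i s1 \o a) (shift_piece i s1 \o b))) => _ le_S.
- exists (shift_piece i s2 \o a), (shift_piece i s2 \o b); split=> //.
    exact: shift_piece_nonoverlap iM NO (in_range s2 s2_range).
  by apply: (shift_piece_offnodes_lt iM eM_in); rewrite /s2 addrC subrK mem_nodes.
- exists (shift_piece i s1 \o a), (shift_piece i s1 \o b); split=> //.
    exact: shift_piece_nonoverlap iM NO (in_range s1 s1_range).
  by apply: (shift_piece_offnodes_lt iM em_in); rewrite /s1 addrC subrK mem_nodes // ltnW.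
Qed.

Lemma offnodes0_psum_ge n (a b : nat -> R) : nonoverlap n a b ->
  exists a' b', [/\ nonoverlap n a' b', offnodes n a' b' = 0%N
                   & psum p g n a b <= psum p g n a' b'].
Proof.
move: {2}(offnodes n a b).+1 (ltnSn (offnodes n a b)) => k.
elim: k a b => // k IH a b; rewrite ltnS => off_k NO.
have [off0|off_gt0] := posnP (offnodes n a b); first by exists a, b.
have [a' [b' [NO' off_lt le_ab]]] := fewer_offnodes_psum_ge NO off_gt0.
have [a'' [b'' [NO'' off0 le_ab']]] := IH a' b' (leq_trans off_lt off_k) NO'.
by exists a'', b''; split=> //; exact: le_trans le_ab'.
Qed.

(* Interval k of the relabelled family is the nondegenerate interval starting at x k, or the
   degenerate interval [0, 0] if there is none. *)
Definition interval_at n (a b : nat -> R) k := [pick j : 'I_n | (a j == x k) && (a j < b j)].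

Definition relabel n (a b c : nat -> R) k : R :=
  oapp (fun j : 'I_n => c j) 0 (interval_at n a b k).

Lemma nonoverlap_relabel n (a b : nat -> R) :
  nonoverlap n a b -> nonoverlap M (relabel n a b a) (relabel n a b b).
Proof.
move=> [ab disj]; split=> [k kM|k k' kM k'M kk']; rewrite /relabel /interval_at.
  by case: pickP => [j _|_] /=; [exact: ab | rewrite lexx ler01].
case: pickP => [j /andP[/eqP aj _]|_]; case: pickP => [j' /andP[/eqP aj' _]|_] /=.
- apply: disj => // jj'; apply: kk'.
  by apply: (inc_inj_in ler_partition (ltnW kM) (ltnW k'M)); rewrite -aj -aj' jj'.
- by right; have [] := ab j (ltn_ord j).
- by left; have [] := ab j' (ltn_ord j').
- by left.
Qed.

Lemma offnodes0_psum_le_relabel n (a b : nat -> R) :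
  nonoverlap n a b -> offnodes n a b = 0%N ->
  psum p f n a b <= psum p f M (relabel n a b a) (relabel n a b b).
Proof.
move=> [ab disj] off0; have p0 : p != 0 by rewrite gt_eqF // (lt_le_trans ltr01).
pose F (j : 'I_n) := `|f (b j) - f (a j)| `^ p.
have -> : psum p f M (relabel n a b a) (relabel n a b b) =
          \sum_(k < M) oapp F 0 (interval_at n a b k).
  apply: eq_bigr => k _; rewrite /relabel.
  by case: (interval_at n a b k) => //=; rewrite subrr normr0 powR0.
apply: sum_le_sum_pick => [j|j|k j j' /andP[/eqP aj abj] /andP[/eqP aj' abj']].
- exact: powR_ge0.
- move=> Fj; have abj : a j < b j.
    have [_ [abj' _]] := ab j (ltn_ord j); rewrite lt_neqAle abj' andbT.
    by apply: contraNneq Fj => ->; rewrite subrr normr0 powR0.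
  have /nodesP[k kM ajk] : a j \in nodes := offnodes0 (j, false) off0.
  have kM' : (k < M)%N.
    rewrite ltn_neqAle kM andbT; apply/eqP => kMe; have [_ [_ bj1]] := ab j (ltn_ord j).
    by move: abj; rewrite ajk kMe xM ltNge bj1.
  by exists (Ordinal kM'); rewrite abj ajk eqxx.
- have [/val_inj //|/eqP jj'] := eqVneq (val j) (val j').
  case: (disj j j' (ltn_ord j) (ltn_ord j') jj').
    by rewrite aj' -aj leNgt abj.
  by rewrite aj -aj' leNgt abj'.
Qed.

Lemma offnodes0_pvar_sum_le_upsilon n (a b : nat -> R) :
  nonoverlap n a b -> offnodes n a b = 0%N -> ((pvar_sum p f n a b)%:E <= upsilon p M f)%E.
Proof.
move=> NO off0; apply: (@le_trans _ _ (pvar_sum p f M (relabel n a b a) (relabel n a b b))%:E).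
  by rewrite lee_fin pvar_sum_le ?offnodes0_psum_le_relabel // (le_trans ler01).
apply: ereal_sup_ubound; exists (relabel n a b a), (relabel n a b b).
by split=> //; exact: nonoverlap_relabel.
Qed.

Lemma offnodes0_psum_interp n (a b : nat -> R) :
  offnodes n a b = 0%N -> psum p g n a b = psum p f n a b.
Proof.
move=> off0; apply: eq_bigr => j _.
by rewrite !interp_nodes // (offnodes0 (j, false) off0, offnodes0 (j, true) off0).
Qed.

End Partition.

Theorem lemma4p1 (R : realType) (p : R) (f g : R -> R) (M : nat) (x : nat -> R) :
  1 <= p ->
  x 0%N = 0 -> x M = 1 ->
  (forall i, (i < M)%N -> x i < x i.+1) ->
  (forall i t, (i < M)%N -> x i <= t -> t <= x i.+1 ->
     g t = f (x i) + (f (x i.+1) - f (x i)) * (t - x i) / (x i.+1 - x i)) ->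
  (Varp p g <= upsilon p M f)%E.
Proof.
move=> p1 x0 xM x_incr g_interp.
apply: ge_ereal_sup => _ [n [a [b [NO ->]]]].
have [a' [b' [NO' off0 le_psum]]] := offnodes0_psum_ge x_incr x0 xM g_interp p1 NO.
apply: le_trans (offnodes0_pvar_sum_le_upsilon x_incr xM f p1 NO' off0).
rewrite lee_fin; apply: pvar_sum_le; first exact: le_trans ler01 p1.
by rewrite -(offnodes0_psum_interp x_incr x0 xM g_interp).
Qed.
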